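(* Let $G$ be a non-complete double-critical $7$-chromatic graph and let $x$ be a vertex of degree $9$ in $G$. Then the complement $\overline{G_x}$ does not contain $K_4^-$ (the complete graph on $4$ vertices minus one edge) as a subgraph.
   Context: All graphs are finite and simple. A graph $G$ is (vertex-)critical if $\chi(G-v)<\chi(G)$ for every vertex $v\in V(G)$. A critical graph $G$ is double-critical if $\chi(G-x-y)\le\chi(G)-2$ for every edge $xy\in E(G)$. For a vertex $x$, $G_x:=G[N(x)]$ denotes the subgraph induced by the neighbourhood of $x$, and $\overline{G_x}$ its complement. *)

From mathcomp Require Import all_boot.
Set Implicit Arguments. Unset Strict Implicit. Unset Printing Implicit Defensive.

(* A finite simple graph: vertex type T : finType, adjacency e : rel T,
   assumed symmetric and irreflexive (hypotheses of the theorem). *)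

Definition colorableb (T : finType) (e : rel T) (S : {set T}) (k : nat) : bool :=
  [exists f : {ffun T -> 'I_k},
     [forall u in S, forall v in S, e u v ==> (f u != f v)]].

(* chromatic number of G[S]: least k such that G[S] is k-colourable
   (k = #|T| always works, so searching 0..#|T| suffices; the index found
   in iota 0 _ is the value itself) *)
Definition chi (T : finType) (e : rel T) (S : {set T}) : nat :=
  find (colorableb e S) (iota 0 #|T|.+1).

Definition complete_graph (T : finType) (e : rel T) : Prop :=
  forall u v : T, u != v -> e u v.

Definition critical (T : finType) (e : rel T) : Prop :=
  forall v : T, chi e (setT :\ v) < chi e setT.

Definition double_critical (T : finType) (e : rel T) : Prop :=
  critical e /\
  forall x y : T, e x y -> chi e (setT :\ x :\ y) <= chi e setT - 2.

Definition degree (T : finType) (e : rel T) (x : T) : nat := #|[set y | e x y]|.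

(* the complement of G_x = G[N(x)] contains K_4^- as a (not necessarily
   induced) subgraph: four distinct neighbours a,b,c,d of x such that all
   pairs except possibly {c,d} are non-adjacent in G *)
Definition compl_nbhd_has_K4minus (T : finType) (e : rel T) (x : T) : Prop :=
  exists a b c d : T,
    [/\ [/\ e x a, e x b, e x c & e x d],
        [/\ a != b, a != c, a != d & [/\ b != c, b != d & c != d]] &
        [/\ ~~ e a b, ~~ e a c, ~~ e a d, ~~ e b c & ~~ e b d]].

From mathcomp Require Import all_boot.
Set Implicit Arguments. Unset Strict Implicit. Unset Printing Implicit Defensive.

(* If G is not 6-colourable and f is a 5-colouring of G - x - y, every colour
   occurs on a common neighbour of x and y. Let a, b, c, d span K_4^- in the
   complement of G_x and let W be the other five neighbours of x. The common
   neighbours of x and b lie in W, so all five of them are adjacent to b. The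
   colour of b in a 5-colouring of G - x - a occurs on a common neighbour v of
   x and a; then v lies in W, so v is a neighbour of b with the same colour. *)

Definition proper_on (T : finType) (e : rel T) (S : {set T}) k (f : {ffun T -> 'I_k}) :=
  [forall u in S, forall v in S, e u v ==> (f u != f v)].

Section Colouring.
Variables (T : finType) (e : rel T).

Lemma adj_neq u v w : e u v -> ~~ e u w -> v != w.
Proof. by move=> uv; apply: contraNneq => <-. Qed.

Lemma proper_onP (S : {set T}) k (f : {ffun T -> 'I_k}) :
  reflect (forall u v, u \in S -> v \in S -> e u v -> f u != f v) (proper_on e S f).
Proof.
apply: (iffP forallP) => [Hf u v uS vS | Hf u].
  by move/implyP/(_ uS)/forallP/(_ v)/implyP/(_ vS)/implyP: (Hf u).
apply/implyP => uS; apply/forallP => v; apply/implyP => vS; apply/implyP.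
exact: Hf.
Qed.

Lemma colorableP (S : {set T}) k :
  reflect (exists f : {ffun T -> 'I_k}, proper_on e S f) (colorableb e S k).
Proof. exact: existsP. Qed.

Lemma colorable_card (S : {set T}) : irreflexive e -> colorableb e S #|T|.
Proof.
move=> e_irr; apply/colorableP; exists [ffun v => enum_rank v].
apply/proper_onP => u v _ _ huv; rewrite !ffunE (inj_eq enum_rank_inj).
by apply: contraTneq huv => ->; rewrite e_irr.
Qed.

Lemma colorable_widen (S : {set T}) j k :
  j <= k -> colorableb e S j -> colorableb e S k.
Proof.
move=> le_jk /colorableP [f /proper_onP Hf]; apply/colorableP.
exists [ffun v => widen_ord le_jk (f v)]; apply/proper_onP => u v uS vS huv.
by rewrite !ffunE -val_eqE /= val_eqE Hf.
Qed.

Lemma lt_chi_uncolorable (S : {set T}) j : j < chi e S -> ~~ colorableb e S j.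
Proof.
move=> lt_j; have := before_find 0 lt_j; rewrite nth_iota ?add0n => [->//|].
by apply: leq_trans lt_j _; rewrite /chi -[X in _ <= X](size_iota 0 #|T|.+1) find_size.
Qed.

Hypothesis e_irr : irreflexive e.

Lemma chi_colorable (S : {set T}) : colorableb e S (chi e S).
Proof.
have has_col : has (colorableb e S) (iota 0 #|T|.+1).
  apply/hasP; exists #|T|; last exact: colorable_card.
  by rewrite mem_iota add0n ltnSn.
have := nth_find 0 has_col; rewrite nth_iota ?add0n //.
by rewrite -{2}(size_iota 0 #|T|.+1) -has_find.
Qed.

Lemma chi_le_colorable (S : {set T}) k : chi e S <= k -> colorableb e S k.
Proof. by move=> le_chi; apply: colorable_widen le_chi (chi_colorable S). Qed.

End Colouring.

Section Recolouring.
Variables (T : finType) (e : rel T).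
Hypotheses (e_sym : symmetric e) (e_irr : irreflexive e).

(* Give [y] and the [i]-coloured neighbours of [x] a new colour, and [x] the
   freed colour [i]: this is proper unless some common neighbour has colour [i]. *)
Lemma recolour_edge k x y (f : {ffun T -> 'I_k}) (i : 'I_k) :
  proper_on e (setT :\ x :\ y) f ->
  (forall v, e x v -> e y v -> f v != i) ->
  colorableb e setT k.+1.
Proof.
move=> /proper_onP f_proper no_common.
have f_prop u v : u != x -> u != y -> v != x -> v != y -> e u v -> f u != f v.
  by move=> ux uy vx vy; apply: f_proper; rewrite !inE ?ux ?uy ?vx ?vy.
pose top : 'I_k.+1 := ord_max.
pose special v := (v == y) || (f v == i) && e x v.
pose g := [ffun v => if v == x then lift top i
                     else if special v then top else lift top (f v)].
have gE v : v != x -> g v = if special v then top else lift top (f v).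
  by move=> vx; rewrite ffunE (negbTE vx).
have special_nb w : w != y -> special w -> (f w == i) && e x w.
  by move=> wy; rewrite /special (negbTE wy).
have special_indep u v : u != x -> v != x -> special u -> special v -> ~~ e u v.
  move=> ux vx su sv; apply/negP => huv.
  have not_y_nb w : w != x -> special w -> e y w -> False.
    move=> wx sw yw; have wy : w != y by apply: contraTneq yw => ->; rewrite e_irr.
    by case/andP: (special_nb w wy sw) => fw xw; move/negP: (no_common w xw yw).
  have [uy | uy] := eqVneq u y; first by apply: (not_y_nb v); rewrite -?uy.
  have [vy | vy] := eqVneq v y; first by apply: (not_y_nb u); rewrite // -vy e_sym.
  case/andP: (special_nb u uy su) => /eqP fu _; case/andP: (special_nb v vy sv) => /eqP fv _.
  by move/negP: (f_prop u v ux uy vx vy huv); rewrite fu fv.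
have gx v : e x v -> g x != g v.
  move=> xv; have vx : v != x by apply: contraTneq xv => ->; rewrite e_irr.
  rewrite [g x]ffunE eqxx gE //; case: ifP => sv; first by rewrite eq_sym neq_lift.
  by rewrite (inj_eq lift_inj) eq_sym; move: sv; rewrite /special xv andbT => /norP [].
have g_off u v : u != x -> v != x -> e u v -> g u != g v.
  move=> ux vx huv; rewrite !gE //.
  case: (boolP (special u)) => su; case: (boolP (special v)) => sv.
  - by move/negP: (special_indep u v ux vx su sv).
  - by rewrite neq_lift.
  - by rewrite eq_sym neq_lift.
  rewrite (inj_eq lift_inj); apply: f_prop => //.
    by case/norP: su.
  by case/norP: sv.
apply/colorableP; exists g; apply/proper_onP => u v _ _.
have [-> | ux] := eqVneq u x; first exact: gx.
have [-> | vx] := eqVneq v x; last exact: g_off.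
by rewrite e_sym eq_sym; apply: gx.
Qed.

Lemma colours_common_nbhd k x y (f : {ffun T -> 'I_k}) :
  ~~ colorableb e setT k.+1 -> proper_on e (setT :\ x :\ y) f ->
  f @: [set v | e x v && e y v] = setT.
Proof.
move=> uncol f_proper; apply/setP => i; rewrite inE.
apply: (contraNT _ uncol) => no_i; apply: (recolour_edge (i := i) f_proper) => v xv yv.
by move: no_i; apply: contraNneq => <-; rewrite imset_f // inE xv yv.
Qed.

Lemma card_common_nbhd k x y (f : {ffun T -> 'I_k}) :
  ~~ colorableb e setT k.+1 -> proper_on e (setT :\ x :\ y) f ->
  k <= #|[set v | e x v && e y v]|.
Proof.
move=> uncol /(colours_common_nbhd uncol) im_f.
by rewrite -[k]card_ord -cardsT -im_f leq_imset_card.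
Qed.

End Recolouring.

Section NeighbourhoodOfUncolorable.
Variables (T : finType) (e : rel T) (k : nat) (x : T).
Hypotheses (e_sym : symmetric e) (e_irr : irreflexive e).
Hypothesis uncol : ~~ colorableb e setT k.+1.
Hypothesis edge_col : forall y, e x y -> colorableb e (setT :\ x :\ y) k.

Lemma common_nbhd_eq y (W : {set T}) :
  e x y -> #|W| <= k -> [set v | e x v && e y v] \subset W ->
  [set v | e x v && e y v] = W.
Proof.
move=> xy cardW sub_W; have /colorableP [f f_proper] := edge_col xy.
apply/eqP; rewrite eqEcard sub_W (leq_trans cardW) //.
exact: card_common_nbhd f_proper.
Qed.

Lemma compl_nbhd_K4minus_free : degree e x <= k + 4 -> ~ compl_nbhd_has_K4minus e x.
Proof.
move=> deg_x [a [b [c [d [[xa xb xc xd] [ab ac ad [bc bd cd]] [nab nac nad nbc nbd]]]]]].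
pose W := [set v | e x v] :\ a :\ b :\ c :\ d.
have cardW : #|W| <= k.
  move: deg_x; rewrite /degree (cardsD1 a) (cardsD1 b) (cardsD1 c) (cardsD1 d).
  by rewrite !inE xa xb xc xd (eq_sym b a) (eq_sym c b) (eq_sym c a)
    (eq_sym d c) (eq_sym d b) (eq_sym d a) ab ac ad bc bd cd !add1n addn4 !ltnS.
have irr u : ~~ e u u by rewrite e_irr.
have nba : ~~ e b a by rewrite e_sym.
have common_xb : [set v | e x v && e b v] = W.
  apply: (common_nbhd_eq xb cardW); apply/subsetP => v; rewrite !inE => /andP [xv bv].
  by rewrite xv (adj_neq bv nbd) (adj_neq bv nbc) (adj_neq bv (irr b)) (adj_neq bv nba).
have /colorableP [fa /proper_onP fa_proper] := edge_col xa.
have /imsetP [v] : fa b \in fa @: [set v | e x v && e a v].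
  by rewrite (colours_common_nbhd e_sym e_irr uncol) ?inE //; apply/proper_onP.
rewrite inE => /andP [xv av] fab.
have bv : e b v.
  suff : v \in [set v | e x v && e b v] by rewrite inE => /andP [].
  by rewrite common_xb !inE xv (adj_neq av nad) (adj_neq av nac) (adj_neq av nab) (adj_neq av (irr a)).
have bS : b \in setT :\ x :\ a by rewrite !inE (eq_sym b a) ab (adj_neq xb (irr x)).
have vS : v \in setT :\ x :\ a by rewrite !inE (adj_neq av (irr a)) (adj_neq xv (irr x)).
by move: (fa_proper b v bS vS bv); rewrite fab eqxx.
Qed.

End NeighbourhoodOfUncolorable.

Theorem proposition26 (T : finType) (e : rel T)
  (e_sym : symmetric e) (e_irr : irreflexive e)
  (Hnc : ~ complete_graph e) (Hdc : double_critical e) (H7 : chi e setT = 7)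
  (x : T) (Hdeg : degree e x = 9) :
  ~ compl_nbhd_has_K4minus e x.
Proof.
have uncol6 : ~~ colorableb e setT 6 by apply: lt_chi_uncolorable; rewrite H7.
apply: (compl_nbhd_K4minus_free e_sym e_irr uncol6); last by rewrite Hdeg.
move=> y xy; apply: (chi_le_colorable e_irr).
by have := Hdc.2 x y xy; rewrite H7.
Qed.
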